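(* Let $K$ be a nonempty convex subset of a real Hausdorff locally convex topological vector space $X$, let $Y$ be a nonempty finite set and let $U\subseteq K$ be self-segment-dense in $K$. Let $f:K\times Y\to\mathbb R$ satisfy: (i) for every $y\in Y$ the map $x\mapsto f(x,y)$ is convex and lower semicontinuous on $U$; (ii) for all $y_1,y_2\in Y$ and $t\in[0,1]$ there exists $y_3\in Y$ with $f(x,y_3)\ge(1-t)f(x,y_1)+tf(x,y_2)$ for all $x\in U$; (iii) for every $y\in Y$ the infimum $\inf_{x\in U}f(x,y)$ is attained. Then $$\inf_{x\in U}\sup_{y\in Y}f(x,y)=\sup_{y\in Y}\min_{x\in U}f(x,y).$$
   Context: $[x,y]=\{x+t(y-x):t\in[0,1]\}$. Convex on $U$: $h((1-t)u+tv)\le(1-t)h(u)+th(v)$ whenever $u,v\in U$, $t\in[0,1]$, $(1-t)u+tv\in U$. Lower semicontinuous on $U$: for every $u\in U$ and net $(u_i)\subseteq U$ with $u_i\to u$, $\liminf h(u_i)\ge h(u)$. Self-segment-dense: for convex $V$ and $U\subseteq V$, $U$ is self-segment-dense in $V$ if $V\subseteq\operatorname{cl}U$ and for all $x,y\in U$, $[x,y]\cap U$ is dense in $[x,y]$. *)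

From Stdlib Require Export Reals.
Open Scope R_scope.

Record LCTVS := {
  carrier :> Type;
  vadd : carrier -> carrier -> carrier;
  vzero : carrier;
  vopp : carrier -> carrier;
  vscal : R -> carrier -> carrier;
  vadd_assoc : forall x y z, vadd x (vadd y z) = vadd (vadd x y) z;
  vadd_comm : forall x y, vadd x y = vadd y x;
  vadd_0 : forall x, vadd x vzero = x;
  vadd_opp : forall x, vadd x (vopp x) = vzero;
  vscal_1 : forall x, vscal 1 x = x;
  vscal_assoc : forall a b x, vscal a (vscal b x) = vscal (a * b) x;
  vscal_distr_v : forall a x y, vscal a (vadd x y) = vadd (vscal a x) (vscal a y);
  vscal_distr_s : forall a b x, vscal (a + b) x = vadd (vscal a x) (vscal b x);
  is_open : (carrier -> Prop) -> Prop;
  open_full : is_open (fun _ => True);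
  open_inter : forall A B, is_open A -> is_open B -> is_open (fun x => A x /\ B x);
  open_union : forall (I : Type) (F : I -> carrier -> Prop),
      (forall i, is_open (F i)) -> is_open (fun x => exists i, F i x);
  vadd_cont : forall x y W, is_open W -> W (vadd x y) ->
      exists A B, is_open A /\ A x /\ is_open B /\ B y /\
        forall x' y', A x' -> B y' -> W (vadd x' y');
  vscal_cont : forall t x W, is_open W -> W (vscal t x) ->
      exists d A, 0 < d /\ is_open A /\ A x /\
        forall s x', Rabs (s - t) < d -> A x' -> W (vscal s x');
  hausdorff : forall x y, x <> y ->
      exists A B, is_open A /\ A x /\ is_open B /\ B y /\
        forall z, ~ (A z /\ B z);
  locally_convex : forall W, is_open W -> W vzero ->
      exists V, is_open V /\ V vzero /\ (forall z, V z -> W z) /\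
        forall x y t, V x -> V y -> 0 <= t <= 1 ->
          V (vadd (vscal (1 - t) x) (vscal t y))
}.

Arguments vadd {_}. Arguments vscal {_}. Arguments vopp {_}. Arguments is_open {_}.

Section Defs.
Variable X : LCTVS.

Definition segpt (x y : X) (t : R) : X := vadd x (vscal t (vadd y (vopp x))).

Definition segment (x y : X) (z : X) : Prop := exists t, 0 <= t <= 1 /\ z = segpt x y t.

Definition convex_set (V : X -> Prop) : Prop :=
  forall x y t, V x -> V y -> 0 <= t <= 1 -> V (vadd (vscal (1 - t) x) (vscal t y)).

Definition closure (U : X -> Prop) (z : X) : Prop :=
  forall W, is_open W -> W z -> exists u, W u /\ U u.

(* A is dense in B (B with the subspace topology), A a subset of B *)
Definition dense_in (A B : X -> Prop) : Prop :=
  forall z, B z -> forall W, is_open W -> W z -> exists u, W u /\ A u.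

Definition self_segment_dense (U V : X -> Prop) : Prop :=
  (forall z, V z -> closure U z) /\
  forall x y, U x -> U y -> dense_in (fun z => segment x y z /\ U z) (segment x y).

Definition convex_on (U : X -> Prop) (h : X -> R) : Prop :=
  forall u v t, U u -> U v -> 0 <= t <= 1 -> U (vadd (vscal (1 - t) u) (vscal t v)) ->
    h (vadd (vscal (1 - t) u) (vscal t v)) <= (1 - t) * h u + t * h v.

Record directed := {
  dom :> Type;
  dle : dom -> dom -> Prop;
  dle_refl : forall i, dle i i;
  dle_trans : forall i j k, dle i j -> dle j k -> dle i k;
  dle_dir : forall i j, exists k, dle i k /\ dle j k;
  dom_inh : inhabited dom
}.

Definition eventually (D : directed) (P : D -> Prop) : Prop :=
  exists i0, forall i, dle D i0 i -> P i.

Definition net_conv (D : directed) (u : D -> X) (x : X) : Prop :=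
  forall W, is_open W -> W x -> eventually D (fun i => W (u i)).

(* liminf_i a_i >= c, unfolded: for every b < c, eventually a_i > b *)
Definition liminf_ge (D : directed) (a : D -> R) (c : R) : Prop :=
  forall b, b < c -> eventually D (fun i => b < a i).

Definition lsc_on (U : X -> Prop) (h : X -> R) : Prop :=
  forall (u : X) (D : directed) (ui : D -> X),
    U u -> (forall i, U (ui i)) -> net_conv D ui u -> liminf_ge D (fun i => h (ui i)) (h u).

End Defs.

Arguments segment {_}. Arguments convex_set {_}. Arguments self_segment_dense {_}.
Arguments convex_on {_}. Arguments lsc_on {_}.

Definition is_sup (P : R -> Prop) (s : R) : Prop := is_lub P s.
Definition is_inf (P : R -> Prop) (s : R) : Prop :=
  (forall r, P r -> s <= r) /\ (forall b, (forall r, P r -> b <= r) -> b <= s).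
Definition is_min (P : R -> Prop) (m : R) : Prop := P m /\ forall r, P r -> m <= r.

(* Let v := max_y min_x f(x,y), using (iii).  Trivially sup_y min_x f <= v <= inf_x max_y f,
   so it suffices to find, for each d > 0, an x in U with f(x,y) < v + d for every y.  This
   is proved by induction on the size of Y, splitting max_y f into f(.,y1) and the maximum
   of the rest: for two convex functions phi1, phi2, if every combination (1-t) phi1 + t phi2
   gets below v + e (inherited from the induction hypothesis through (ii)), then some x
   makes both small.  Otherwise [0,1] splits into two disjoint relatively open sets
   according to which function is large at a witness for t, while two witnesses of
   opposite kinds for the same t would give, by convexity on the segment joining them and
   density of U along segments, a point where both are small. *)

From Stdlib Require Import Reals List Lra Lia Classical IndefiniteDescription
  FunctionalExtensionality PropExtensionality.
Open Scope R_scope.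

Section VectorAlgebra.
Context {X : LCTVS}.

Lemma vadd_0l (x : X) : vadd (vzero X) x = x.
Proof. rewrite vadd_comm. apply vadd_0. Qed.

Lemma vadd_subK (x y : X) : vadd (vadd x (vopp y)) y = x.
Proof. rewrite <- vadd_assoc, (vadd_comm _ (vopp y)), vadd_opp. apply vadd_0. Qed.

Lemma vadd_cancel_l (w x y : X) : vadd w x = vadd w y -> x = y.
Proof.
  intro H.
  assert (E : forall z : X, vadd (vopp w) (vadd w z) = z).
  { intro z. rewrite vadd_assoc, (vadd_comm _ (vopp w)), vadd_opp. apply vadd_0l. }
  rewrite <- (E x), <- (E y), H. reflexivity.
Qed.

Lemma vscal_0l (x : X) : vscal 0 x = vzero X.
Proof.
  apply (vadd_cancel_l (vscal 0 x)).
  rewrite vadd_0, <- vscal_distr_s, Rplus_0_r. reflexivity.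
Qed.

Lemma vscal_0r (a : R) : vscal a (vzero X) = vzero X.
Proof.
  apply (vadd_cancel_l (vscal a (vzero X))).
  rewrite vadd_0, <- vscal_distr_v, vadd_0. reflexivity.
Qed.

Lemma vadd_ACA (a b c d : X) : vadd (vadd a b) (vadd c d) = vadd (vadd a c) (vadd b d).
Proof.
  rewrite <- !vadd_assoc. f_equal. rewrite !vadd_assoc. f_equal. apply vadd_comm.
Qed.

Lemma vscal_inj_l (r r' : R) (w : X) : w <> vzero X -> vscal r w = vscal r' w -> r = r'.
Proof.
  intros Hw H. apply NNPP. intro Hne. apply Hw.
  assert (H0 : vscal (r - r') w = vzero X).
  { unfold Rminus. rewrite vscal_distr_s, H, <- vscal_distr_s, Rplus_opp_r. apply vscal_0l. }
  rewrite <- (vscal_1 _ w). replace 1 with (/ (r - r') * (r - r')) by (field; lra).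
  rewrite <- vscal_assoc, H0. apply vscal_0r.
Qed.

Definition comb (s : R) (u v : X) : X := vadd (vscal (1 - s) u) (vscal s v).

Lemma comb_same (s : R) (u : X) : comb s u u = u.
Proof.
  unfold comb. rewrite <- vscal_distr_s. replace (1 - s + s) with 1 by ring. apply vscal_1.
Qed.

Lemma comb_translate (s : R) (p q c : X) :
  comb s (vadd p c) (vadd q c) = vadd (comb s p q) c.
Proof.
  unfold comb. rewrite !vscal_distr_v, vadd_ACA, <- (vscal_distr_s _ (1 - s) s c).
  replace (1 - s + s) with 1 by ring. rewrite vscal_1. reflexivity.
Qed.

Lemma comb_on_line (l a b : R) (u w : X) :
  comb l (vadd u (vscal a w)) (vadd u (vscal b w)) = vadd u (vscal ((1 - l) * a + l * b) w).
Proof.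
  unfold comb. rewrite !vscal_distr_v, vadd_ACA, <- vscal_distr_s, !vscal_assoc,
    <- vscal_distr_s.
  replace (1 - l + l) with 1 by ring. rewrite vscal_1. reflexivity.
Qed.

Lemma segpt_comb (u v : X) (s : R) : segpt X u v s = comb s u v.
Proof.
  unfold segpt. set (w := vadd v (vopp u)).
  assert (Eu : vadd u (vscal 0 w) = u) by (rewrite vscal_0l; apply vadd_0).
  assert (Ev : vadd u (vscal 1 w) = v)
    by (rewrite vscal_1, vadd_comm; apply vadd_subK).
  transitivity (comb s (vadd u (vscal 0 w)) (vadd u (vscal 1 w))).
  - rewrite comb_on_line. replace ((1 - s) * 0 + s * 1) with s by ring. reflexivity.
  - rewrite Eu, Ev. reflexivity.
Qed.

Lemma segpt_inj (u v : X) (r r' : R) : u <> v -> segpt X u v r = segpt X u v r' -> r = r'.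
Proof.
  intros Huv H. apply vadd_cancel_l in H. apply (vscal_inj_l r r' (vadd v (vopp u))); [|exact H].
  intro E. apply Huv. rewrite <- (vadd_subK v u), E. symmetry. apply vadd_0l.
Qed.

Lemma convex_segpt_between (C : X -> Prop) (u v : X) (t s r : R) :
  convex_set C -> C (segpt X u v t) -> C (segpt X u v s) ->
  t <= r <= s \/ s <= r <= t -> C (segpt X u v r).
Proof.
  intros HC Ht Hs Hr.
  destruct (Req_dec s t) as [E|E]; [subst s; replace r with t by lra; exact Ht|].
  set (l := (r - t) / (s - t)).
  assert (El : l * (s - t) = r - t) by (unfold l; field; lra).
  assert (Hl : 0 <= l <= 1) by (destruct Hr; split; nra).
  replace (segpt X u v r) with (comb l (segpt X u v t) (segpt X u v s)).
  - exact (HC _ _ l Ht Hs Hl).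
  - unfold segpt. rewrite comb_on_line. f_equal. f_equal. nra.
Qed.

End VectorAlgebra.

Section Topology.
Context {X : LCTVS}.

Lemma open_translate (W : X -> Prop) (c : X) :
  is_open W -> is_open (fun x => W (vadd x c)).
Proof.
  intro HW.
  set (I := {A : X -> Prop | is_open A /\ forall z, A z -> W (vadd z c)}).
  replace (fun x => W (vadd x c)) with (fun x => exists i : I, proj1_sig i x).
  - apply open_union. intro i. exact (proj1 (proj2_sig i)).
  - apply functional_extensionality. intro x. apply propositional_extensionality. split.
    + intros [[A [HA HAW]] Hx]. exact (HAW x Hx).
    + intro Hx. destruct (vadd_cont X x c W HW Hx) as [A [B [HA [HAx [HB [HBc HAB]]]]]].
      exists (exist _ A (conj HA (fun z Hz => HAB z c Hz HBc))). exact HAx.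
Qed.

Lemma convex_open_nbhd (W : X -> Prop) (z : X) :
  is_open W -> W z ->
  exists C, is_open C /\ C z /\ (forall p, C p -> W p) /\ convex_set C.
Proof.
  intros HW Hz.
  destruct (locally_convex X (fun x => W (vadd x z)) (open_translate W z HW))
    as [V [HV [HV0 [HVW HVc]]]]; [rewrite vadd_0l; exact Hz|].
  exists (fun x => V (vadd x (vopp z))). repeat split.
  - apply open_translate. exact HV.
  - rewrite vadd_opp. exact HV0.
  - intros p Hp. apply HVW in Hp. rewrite vadd_subK in Hp. exact Hp.
  - intros p q l Hp Hq Hl. fold (comb l p q). rewrite <- comb_translate. exact (HVc _ _ l Hp Hq Hl).
Qed.

Lemma convex_nbhd_excluding_two (p q1 q2 : X) :
  p <> q1 -> p <> q2 ->
  exists C, is_open C /\ C p /\ ~ C q1 /\ ~ C q2 /\ convex_set C.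
Proof.
  intros H1 H2.
  destruct (hausdorff X _ _ H1) as [A1 [B1 [HA1 [HA1p [_ [HB1q H1']]]]]].
  destruct (hausdorff X _ _ H2) as [A2 [B2 [HA2 [HA2p [_ [HB2q H2']]]]]].
  destruct (convex_open_nbhd (fun x => A1 x /\ A2 x) p (open_inter X _ _ HA1 HA2)
              (conj HA1p HA2p)) as [C [HC [HCp [HCA HCc]]]].
  exists C. repeat split; auto.
  - intro Hq. exact (H1' q1 (conj (proj1 (HCA _ Hq)) HB1q)).
  - intro Hq. exact (H2' q2 (conj (proj2 (HCA _ Hq)) HB2q)).
Qed.

End Topology.

Definition dense_on_segments {X : LCTVS} (U : X -> Prop) : Prop :=
  forall u v, U u -> U v -> forall t, 0 <= t <= 1 -> forall eta, 0 < eta ->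
  exists s, 0 <= s <= 1 /\ Rabs (s - t) < eta /\ U (comb s u v).

Lemma self_segment_dense_on_segments {X : LCTVS} (K U : X -> Prop) :
  self_segment_dense U K -> dense_on_segments U.
Proof.
  intros [_ Hd] u v Hu Hv t Ht eta Heta.
  destruct (classic (u = v)) as [<-|Huv].
  { exists t. rewrite Rminus_diag, Rabs_R0, comb_same. auto. }
  set (e := eta / 2).
  assert (Hne : forall r, r <> t -> segpt X u v t <> segpt X u v r)
    by (intros r Hr E; apply Hr, eq_sym, (segpt_inj u v _ _ Huv E)).
  destruct (convex_nbhd_excluding_two (segpt X u v t) (segpt X u v (t - e))
              (segpt X u v (t + e)) ltac:(apply Hne; unfold e; lra)
              ltac:(apply Hne; unfold e; lra))
    as [C [HC [HCt [Hlo [Hhi HCc]]]]].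
  destruct (Hd u v Hu Hv _ (ex_intro _ t (conj Ht eq_refl)) C HC HCt)
    as [w [HCw [[s [Hs ->]] HUw]]].
  exists s. split; [exact Hs|]. split; [|rewrite <- segpt_comb; exact HUw].
  (* otherwise [C] would contain one of the two excluded points between [t] and [s] *)
  apply NNPP. intro Hfar. apply Rnot_lt_le in Hfar.
  destruct (Rle_lt_dec 0 (s - t)).
  - rewrite Rabs_right in Hfar by lra.
    apply Hhi, (convex_segpt_between C u v t s); auto. unfold e; lra.
  - rewrite Rabs_left in Hfar by lra.
    apply Hlo, (convex_segpt_between C u v t s); auto. unfold e; lra.
Qed.

Lemma lerp_lt_of_near (a b s s0 eps : R) :
  0 < eps -> Rabs (s - s0) < eps / (1 + Rabs a + Rabs b) ->
  (1 - s) * a + s * b < (1 - s0) * a + s0 * b + eps.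
Proof.
  intros Heps Hs.
  set (M := 1 + Rabs a + Rabs b).
  assert (HM : 0 < M) by (unfold M; pose proof (Rabs_pos a); pose proof (Rabs_pos b); lra).
  assert (HsM : Rabs (s - s0) * M < eps).
  { apply (Rmult_lt_compat_r M) in Hs; [|exact HM]. unfold Rdiv in Hs.
    rewrite Rmult_assoc, Rinv_l, Rmult_1_r in Hs by lra. exact Hs. }
  assert (Hba : Rabs (b - a) <= M).
  { unfold Rminus. pose proof (Rabs_triang b (- a)). rewrite Rabs_Ropp in *.
    unfold M. lra. }
  assert (Hprod : (s - s0) * (b - a) <= Rabs (s - s0) * M).
  { eapply Rle_trans; [apply Rle_abs|]. rewrite Rabs_mult.
    apply Rmult_le_compat_l; [apply Rabs_pos | exact Hba]. }
  lra.
Qed.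

Definition open_in_unit_interval (P : R -> Prop) : Prop :=
  forall t, 0 <= t <= 1 -> P t ->
  exists r, 0 < r /\ forall s, 0 <= s <= 1 -> Rabs (s - t) < r -> P s.

Lemma unit_interval_connected (P Q : R -> Prop) :
  open_in_unit_interval P -> open_in_unit_interval Q ->
  (forall t, 0 <= t <= 1 -> P t \/ Q t) ->
  (forall t, 0 <= t <= 1 -> ~ (P t /\ Q t)) ->
  P 0 -> Q 1 -> False.
Proof.
  intros HPo HQo Hcov Hdisj HP0 HQ1.
  destruct (completeness (fun t => 0 <= t <= 1 /\ P t)) as [tau [Hub Hlub]].
  { exists 1. intros t [Ht _]. lra. }
  { exists 0. split; [lra | exact HP0]. }
  assert (Htau : 0 <= tau <= 1).
  { split; [apply Hub; split; [lra | exact HP0]|]. apply Hlub. intros t [Ht _]. lra. }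
  destruct (Hcov tau Htau) as [HP|HQ].
  - destruct (Req_dec tau 1) as [->|Hne]; [exact (Hdisj 1 Htau (conj HP HQ1))|].
    destruct (HPo tau Htau HP) as [r [Hr HPr]].
    set (s := tau + Rmin r (1 - tau) / 2).
    assert (Hmin : 0 < Rmin r (1 - tau) <= r /\ Rmin r (1 - tau) <= 1 - tau)
      by (split; [split; [apply Rmin_pos; lra | apply Rmin_l] | apply Rmin_r]).
    assert (Hs : 0 <= s <= 1) by (unfold s; lra).
    assert (Hst : s <= tau).
    { apply Hub. split; [exact Hs|]. apply HPr; [exact Hs|].
      unfold s. rewrite Rabs_right; lra. }
    unfold s in Hst. lra.
  - destruct (HQo tau Htau HQ) as [r [Hr HQr]].
    destruct (classic (exists t, (0 <= t <= 1 /\ P t) /\ tau - r < t))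
      as [[t [[Ht HPt] Hlt]] | Hnone].
    + assert (Htt : t <= tau) by (apply Hub; auto).
      apply (Hdisj t Ht). split; [exact HPt|].
      apply HQr; [exact Ht|]. rewrite Rabs_left1; lra.
    + assert (Hle : tau <= tau - r).
      { apply Hlub. intros t Ht. apply Rnot_lt_le. intro Hlt. apply Hnone. eauto. }
      lra.
Qed.

Section TwoConvexFunctions.
Context {X : LCTVS} (U : X -> Prop) (phi1 phi2 : X -> R) (c : R).
Hypothesis HU : dense_on_segments U.
Hypothesis Hphi1 : convex_on U phi1.
Hypothesis Hphi2 : convex_on U phi2.

Definition lerp_witness (e : R) (Bad : X -> Prop) (t : R) : Prop :=
  exists x, U x /\ (1 - t) * phi1 x + t * phi2 x < c + e /\ Bad x.

Lemma lerp_witness_open (e : R) (Bad : X -> Prop) :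
  open_in_unit_interval (lerp_witness e Bad).
Proof.
  intros t _ [x [Hx [Hlt HB]]].
  set (g := c + e - ((1 - t) * phi1 x + t * phi2 x)).
  exists (g / (1 + Rabs (phi1 x) + Rabs (phi2 x))). split.
  - apply Rdiv_lt_0_compat; [unfold g; lra|].
    pose proof (Rabs_pos (phi1 x)); pose proof (Rabs_pos (phi2 x)); lra.
  - intros s _ Hs. exists x. repeat split; auto.
    pose proof (lerp_lt_of_near (phi1 x) (phi2 x) s t g ltac:(unfold g; lra) Hs).
    unfold g in *. lra.
Qed.

(* The two functions take equal affine values at [s0] on the segment from [x] to [x'];
   convexity and density along the segment give a point where both are small. *)
Lemma both_below_of_crossed_witnesses (d e t : R) (x x' : X) :
  0 < e -> 2 * e <= d -> 0 <= t <= 1 -> U x -> U x' ->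
  (1 - t) * phi1 x + t * phi2 x < c + e -> (1 - t) * phi1 x' + t * phi2 x' < c + e ->
  c + d <= phi1 x -> c + d <= phi2 x' ->
  exists z, U z /\ phi1 z < c + d /\ phi2 z < c + d.
Proof.
  intros He Hed Ht Hx Hx' Hlt Hlt' Hx1 Hx2.
  set (a1 := phi1 x) in *. set (a2 := phi2 x) in *.
  set (b1 := phi1 x') in *. set (b2 := phi2 x') in *.
  assert (Ha : a2 < a1) by nra.
  assert (Hb : b1 < b2) by nra.
  set (s0 := (a1 - a2) / ((a1 - a2) + (b2 - b1))).
  assert (Hs0 : 0 < s0 < 1).
  { unfold s0. split; [apply Rdiv_lt_0_compat; lra|].
    apply (Rmult_lt_reg_r ((a1 - a2) + (b2 - b1))); [lra|].
    unfold Rdiv. rewrite Rmult_assoc, Rinv_l by lra. lra. }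
  set (z := (1 - s0) * a1 + s0 * b1).
  assert (Ez : z = (1 - s0) * a2 + s0 * b2) by (unfold z, s0; field; lra).
  assert (Hz : z < c + e).
  { replace z with ((1 - t) * z + t * z) by ring. rewrite Ez at 2.
    replace ((1 - t) * z + t * ((1 - s0) * a2 + s0 * b2)) with
      ((1 - s0) * ((1 - t) * a1 + t * a2) + s0 * ((1 - t) * b1 + t * b2))
      by (unfold z; ring).
    nra. }
  set (eta1 := e / (1 + Rabs a1 + Rabs b1)).
  set (eta2 := e / (1 + Rabs a2 + Rabs b2)).
  assert (Heta : 0 < Rmin eta1 eta2).
  { pose proof (Rabs_pos a1); pose proof (Rabs_pos a2);
    pose proof (Rabs_pos b1); pose proof (Rabs_pos b2).
    apply Rmin_pos; apply Rdiv_lt_0_compat; lra. }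
  destruct (HU x x' Hx Hx' s0 ltac:(lra) _ Heta) as [s [Hs [Hss HUs]]].
  pose proof (lerp_lt_of_near a1 b1 s s0 e He
                (Rlt_le_trans _ _ _ Hss (Rmin_l eta1 eta2))).
  pose proof (lerp_lt_of_near a2 b2 s s0 e He
                (Rlt_le_trans _ _ _ Hss (Rmin_r eta1 eta2))).
  pose proof (Hphi1 x x' s Hx Hx' Hs HUs). pose proof (Hphi2 x x' s Hx Hx' Hs HUs).
  exists (comb s x x'). unfold comb, z, a1, b1, a2, b2 in *. repeat split; [exact HUs | lra | lra].
Qed.

Lemma both_below_of_lerps_below (d : R) :
  0 < d ->
  (forall t, 0 <= t <= 1 -> forall e, 0 < e ->
     exists x, U x /\ (1 - t) * phi1 x + t * phi2 x < c + e) ->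
  exists x, U x /\ phi1 x < c + d /\ phi2 x < c + d.
Proof.
  intros Hd Hlerp. apply NNPP. intro Hno.
  assert (Hbad : forall x, U x -> c + d <= phi1 x \/ c + d <= phi2 x).
  { intros x Hx. apply NNPP. intro N. apply Hno. exists x.
    split; [exact Hx|]. split; apply Rnot_le_lt; intro; apply N; auto. }
  set (e := d / 2).
  assert (He : 0 < e) by (unfold e; lra).
  apply (unit_interval_connected (lerp_witness e (fun x => c + d <= phi2 x))
           (lerp_witness e (fun x => c + d <= phi1 x))); try apply lerp_witness_open.
  - intros t Ht. destruct (Hlerp t Ht e He) as [x [Hx Hlt]].
    destruct (Hbad x Hx); [right | left]; exists x; auto.
  - intros t Ht [[x [Hx [Hlt H2]]] [x' [Hx' [Hlt' H1]]]].
    apply Hno. apply (both_below_of_crossed_witnesses d e t x' x); auto. unfold e; lra.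
  - destruct (Hlerp 0 ltac:(lra) e He) as [x [Hx Hlt]]. exists x.
    repeat split; auto. destruct (Hbad x Hx); [unfold e in *; lra | assumption].
  - destruct (Hlerp 1 ltac:(lra) e He) as [x [Hx Hlt]]. exists x.
    repeat split; auto. destruct (Hbad x Hx); [assumption | unfold e in *; lra].
Qed.

End TwoConvexFunctions.

Fixpoint max_over {Y : Type} (g : Y -> R) (y0 : Y) (L : list Y) : R :=
  match L with nil => g y0 | y :: L' => Rmax (g y) (max_over g y0 L') end.

Section FiniteMax.
Context {Y : Type}.

Lemma max_over_ge (g : Y -> R) (y0 : Y) (L : list Y) (y : Y) :
  y = y0 \/ In y L -> g y <= max_over g y0 L.
Proof.
  induction L as [|a L IH]; simpl; intros [<-|E].
  - lra.
  - contradiction.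
  - eapply Rle_trans; [apply IH; left; reflexivity | apply Rmax_r].
  - destruct E as [<-|E]; [apply Rmax_l|].
    eapply Rle_trans; [apply IH; right; exact E | apply Rmax_r].
Qed.

Lemma max_over_attained (g : Y -> R) (y0 : Y) (L : list Y) :
  exists y, max_over g y0 L = g y.
Proof.
  induction L as [|a L IH]; simpl; [eauto|].
  unfold Rmax. destruct (Rle_dec (g a) (max_over g y0 L)); eauto.
Qed.

Lemma max_over_is_sup (g : Y -> R) (y0 : Y) (L : list Y) :
  (forall y, In y L) -> is_sup (fun s => exists y, s = g y) (max_over g y0 L).
Proof.
  intro HL. split.
  - intros s [y ->]. apply max_over_ge. right. apply HL.
  - intros b Hb. destruct (max_over_attained g y0 L) as [y ->]. apply Hb. eauto.
Qed.

Lemma convex_on_Rmax {X : LCTVS} (U : X -> Prop) (g1 g2 : X -> R) :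
  convex_on U g1 -> convex_on U g2 -> convex_on U (fun x => Rmax (g1 x) (g2 x)).
Proof.
  intros C1 C2 u v t Hu Hv Ht HU.
  pose proof (Rmax_l (g1 u) (g2 u)); pose proof (Rmax_r (g1 u) (g2 u)).
  pose proof (Rmax_l (g1 v) (g2 v)); pose proof (Rmax_r (g1 v) (g2 v)).
  apply Rmax_lub; [eapply Rle_trans; [apply C1; eauto|] | eapply Rle_trans; [apply C2; eauto|]];
    nra.
Qed.

Lemma convex_on_max_over {X : LCTVS} (U : X -> Prop) (f : X -> Y -> R) (y0 : Y) (L : list Y) :
  (forall y, convex_on U (fun x => f x y)) -> convex_on U (fun x => max_over (f x) y0 L).
Proof.
  intro Hc. induction L as [|a L IH]; simpl; [apply Hc | apply convex_on_Rmax; auto].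
Qed.

Lemma lerp_Rmax_le (t a p q : R) : 0 <= t ->
  (1 - t) * a + t * Rmax p q <= Rmax ((1 - t) * a + t * p) ((1 - t) * a + t * q).
Proof.
  intro Ht. unfold Rmax.
  destruct (Rle_dec p q); destruct (Rle_dec ((1 - t) * a + t * p) ((1 - t) * a + t * q)); nra.
Qed.

Section ConcaveLike.
Context {X : LCTVS} (U : X -> Prop) (f : X -> Y -> R).
Hypothesis Hcl : forall y1 y2 t, 0 <= t <= 1 -> exists y3, forall x, U x ->
  f x y3 >= (1 - t) * f x y1 + t * f x y2.

Lemma lerp_max_over_dominated (t : R) (y1 y0 : Y) (L : list Y) :
  0 <= t <= 1 -> exists y0' L', length L' = length L /\
  forall x, U x -> (1 - t) * f x y1 + t * max_over (f x) y0 L <= max_over (f x) y0' L'.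
Proof.
  intro Ht. induction L as [|y L IH].
  - destruct (Hcl y1 y0 t Ht) as [y3 Hy3]. exists y3, nil. split; [reflexivity|].
    intros x Hx. apply Rge_le, Hy3, Hx.
  - destruct IH as [y0' [L' [Hlen Hle]]]. destruct (Hcl y1 y t Ht) as [y3 Hy3].
    exists y0', (y3 :: L'). split; [simpl; rewrite Hlen; reflexivity|].
    intros x Hx. simpl. eapply Rle_trans; [apply lerp_Rmax_le; lra|].
    apply Rmax_lub.
    + eapply Rle_trans; [apply Rge_le, Hy3, Hx | apply Rmax_l].
    + eapply Rle_trans; [apply Hle, Hx | apply Rmax_r].
Qed.

Lemma max_over_approx_below (c : R) :
  dense_on_segments U -> (forall y, convex_on U (fun x => f x y)) ->
  (forall y, exists x, U x /\ f x y <= c) ->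
  forall (L : list Y) (y0 : Y) (d : R), 0 < d -> exists x, U x /\ max_over (f x) y0 L < c + d.
Proof.
  intros HU Hc Hmin L.
  remember (length L) as n eqn:HL. revert L HL.
  induction n as [|n IH]; intros L HL y0 d Hd.
  - destruct L; [|discriminate]. destruct (Hmin y0) as [x [Hx Hle]].
    exists x. split; [exact Hx | simpl; lra].
  - destruct L as [|y1 L]; [discriminate|]. simpl in HL. injection HL as HL.
    destruct (both_below_of_lerps_below U (fun x => f x y1) (fun x => max_over (f x) y0 L) c
                HU (Hc y1) (convex_on_max_over U f y0 L Hc) d Hd) as [x [Hx [H1 H2]]].
    + intros t Ht e He.
      destruct (lerp_max_over_dominated t y1 y0 L Ht) as [y0' [L' [Hlen Hle]]].
      destruct (IH L' ltac:(lia) y0' e He) as [x [Hx Hlt]].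
      exists x. split; [exact Hx|]. specialize (Hle x Hx). lra.
    + exists x. split; [exact Hx|]. simpl. apply Rmax_lub_lt; assumption.
Qed.

End ConcaveLike.
End FiniteMax.

Theorem mainTheorem14 (X : LCTVS) (K U : X -> Prop) (Y : Type) (f : X -> Y -> R)
  (HKne : exists x, K x)
  (HKconv : convex_set K)
  (HYne : inhabited Y)
  (HYfin : exists l : list Y, forall y, In y l)
  (HUK : forall x, U x -> K x)
  (HUssd : self_segment_dense U K)
  (Hi : forall y, convex_on U (fun x => f x y) /\ lsc_on U (fun x => f x y))
  (Hii : forall y1 y2 t, 0 <= t <= 1 -> exists y3, forall x, U x ->
           f x y3 >= (1 - t) * f x y1 + t * f x y2)
  (Hiii : forall y, exists x0, U x0 /\ forall x, U x -> f x0 y <= f x y) :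
  exists v : R,
    is_inf (fun r => exists x, U x /\ is_sup (fun s => exists y, s = f x y) r) v /\
    is_sup (fun r => exists y, is_min (fun s => exists x, U x /\ s = f x y) r) v.
Proof.
  destruct HYfin as [l Hl]. destruct HYne as [y0].
  destruct (functional_choice _ Hiii) as [m Hm].
  destruct (max_over_attained (fun y => f (m y) y) y0 l) as [ys Hys].
  set (c := max_over (fun y => f (m y) y) y0 l) in *.
  assert (Hmc : forall y, f (m y) y <= c)
    by (intro y; apply (max_over_ge (fun y => f (m y) y)); right; apply Hl).
  assert (Hbelow : forall y, exists x, U x /\ f x y <= c)
    by (intro y; exists (m y); split; [apply Hm | apply Hmc]).
  exists c. split; split.
  - intros r [x [Hx [Hub _]]]. rewrite Hys.
    apply Rle_trans with (f x ys); [apply Hm, Hx | apply Hub; eauto].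
  - intros b Hb. apply Rnot_lt_le. intro Hcb.
    destruct (max_over_approx_below U f Hii c (self_segment_dense_on_segments K U HUssd)
                (fun y => proj1 (Hi y)) Hbelow l y0 (b - c) ltac:(lra)) as [x [Hx Hlt]].
    assert (b <= max_over (f x) y0 l)
      by (apply Hb; exists x; split; [exact Hx | apply max_over_is_sup, Hl]).
    lra.
  - intros r [y [[x [Hx ->]] Hmin]].
    apply Rle_trans with (f (m y) y); [|apply Hmc].
    apply Hmin. exists (m y). split; [apply Hm | reflexivity].
  - intros b Hb. apply Hb. exists ys. split; [exists (m ys); split; [apply Hm | exact Hys]|].
    intros r [x [Hx ->]]. rewrite Hys. apply Hm, Hx.
Qed.
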